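(* Let $X=X_\sigma$ be an affine toric variety, where the cone $\sigma$ contains a $k$-dimensional regular face $\tau$ with primitive ray generators $p_1,\ldots,p_k$, and let $\{e_1^{(r)},e_2^{(r)}\mid r=1,\ldots,k\}$ be a set of Demazure roots of $\sigma$ compatible with $\tau$. Then the map $\mathbb{K}[X]\to\mathbb{K}[X]\otimes\mathbb{K}[X]$ given on the basis $\{\chi^u\}_{u\in S_\sigma}$ by $$\chi^u\mapsto \chi^u\otimes\chi^u\prod_{r=1}^{k}\bigl(1\otimes\chi^{e_1^{(r)}}+\chi^{e_2^{(r)}}\otimes 1\bigr)^{\langle p_r,u\rangle}$$ (expanded binomially, i.e. $\chi^u\mapsto\sum_{\bar i+\bar j=(\langle p_1,u\rangle,\ldots,\langle p_k,u\rangle)}\prod_r\binom{\langle p_r,u\rangle}{i_r}\,\chi^{u+\sum_r i_re_2^{(r)}}\otimes\chi^{u+\sum_r j_re_1^{(r)}}$) is a well-defined comultiplication which determines a monoid structure on $X$ whose group of invertible elements is isomorphic to $G_{\bar\chi}$, where $T=\operatorname{Hom}(\tau^\perp\cap M,\mathbb{K}^\times)$ and $\chi_r$ is the character of $T$ given by $e_2^{(r)}-e_1^{(r)}\in\tau^\perp\cap M$. Moreover, the group of invertible elements coincides with the open subset $X_\tau\subseteq X_\sigma$.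
   Context: $\mathbb{K}$ is an algebraically closed field of characteristic zero. $N\cong\mathbb{Z}^n$ is a lattice, $M=\operatorname{Hom}(N,\mathbb{Z})$ its dual, $\langle\cdot,\cdot\rangle$ the natural pairing (extended to $N_\mathbb{Q}\times M_\mathbb{Q}$). For a strongly convex rational polyhedral cone $\sigma\subseteq N_\mathbb{Q}$, $\sigma^\vee=\{u\in M_\mathbb{Q}:\langle v,u\rangle\ge0\ \forall v\in\sigma\}$, $S_\sigma=\sigma^\vee\cap M$, and $X_\sigma=\operatorname{Spec}\mathbb{K}[S_\sigma]$, $\mathbb{K}[S_\sigma]=\bigoplus_{u\in S_\sigma}\mathbb{K}\chi^u$. For a face $\tau$ of $\sigma$, $X_\tau=\operatorname{Spec}\mathbb{K}[S_\tau]$ is an open subset of $X_\sigma$ (the points where $\chi^{u'}\neq0$ for $u'$ in the relative interior of $\tau^\perp\cap\sigma^\vee$). A face is regular if the primitive vectors on its rays are part of a basis of $N$. If $p_1,\ldots,p_m$ are the primitive vectors on the rays of $\sigma$, the Demazure roots associated with $p_i$ are the elements of $\mathfrak R_i=\{e\in M:\langle p_i,e\rangle=-1,\ \langle p_j,e\rangle\ge0\ \forall j\ne i\}$. If $\tau$ is a $k$-dimensional regular face of $\sigma$ with ray generators $p_1,\ldots,p_k$, a set $\{e_1^{(r)},e_2^{(r)}\mid r=1,\ldots,k\}$ of Demazure roots of $\sigma$ is compatible with $\tau$ if $\langle p_s,e_1^{(r)}\rangle=\langle p_s,e_2^{(r)}\rangle=-\delta_{rs}$ for all $r,s=1,\ldots,k$.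 For a torus $T$ and characters $\chi_1,\ldots,\chi_k$ of $T$, $G_{\bar\chi}=\mathbb{G}_a^k\rtimes T$ is the group with multiplication $(\bar\alpha,t)\cdot(\bar\alpha',t')=(\bar\alpha+(\chi_1(t)\alpha'_1,\ldots,\chi_k(t)\alpha'_k),tt')$. An (affine algebraic) monoid is a (normal irreducible affine) variety with an associative morphism $X\times X\to X$ having a neutral element. *)

From HB Require Import structures.
From mathcomp Require Import all_boot all_order all_algebra.
Set Implicit Arguments. Unset Strict Implicit. Unset Printing Implicit Defensive.
Import Order.TTheory GRing.Theory Num.Theory.
Local Open Scope ring_scope.

(* N = M = Z^n, both represented as row vectors 'rV[int]_n; the pairing
   <v,u> is the standard dot product.                                      *)
Definition pairing n (v u : 'rV[int]_n) : int := \sum_(i < n) v 0 i * u 0 i.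

Definition ratv n (v : 'rV[int]_n) : 'rV[rat]_n := map_mx (fun z : int => z%:~R) v.

Definition primitive_vec n (v : 'rV[int]_n) : Prop :=
  forall (d : int) (w : 'rV[int]_n), v = d *: w -> d = 1 \/ d = -1.

(* p_1,...,p_m are exactly the primitive ray generators of a strongly
   convex rational polyhedral cone sigma = cone(p_1,...,p_m) in N_Q.       *)
Definition cone_rays n m (p : 'I_m -> 'rV[int]_n) : Prop :=
  [/\ (forall i, primitive_vec (p i)),
      (forall i, ~ exists lam : 'I_m -> rat,
          [/\ forall j, 0 <= lam j, lam i = 0 &
              ratv (p i) = \sum_(j < m) lam j *: ratv (p j)]) &
      (forall lam : 'I_m -> rat, (forall j, 0 <= lam j) ->
          \sum_(j < m) lam j *: ratv (p j) = 0 -> forall j, lam j = 0)].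

Definition inS n m (p : 'I_m -> 'rV[int]_n) (u : 'rV[int]_n) : bool :=
  [forall i, 0 <= pairing (p i) u].

Definition is_face n m k (p : 'I_m -> 'rV[int]_n) (g : 'I_k -> 'I_m) : Prop :=
  injective g /\
  exists u0, inS p u0 /\ forall j, (exists r, g r = j) <-> pairing (p j) u0 = 0.

Definition regular_face n m k (p : 'I_m -> 'rV[int]_n) (g : 'I_k -> 'I_m) : Prop :=
  exists B : 'M[int]_n, (\det B = 1 \/ \det B = -1) /\
    exists h : 'I_k -> 'I_n, injective h /\ forall r, row (h r) B = p (g r).

Definition demazure_root_at n m (p : 'I_m -> 'rV[int]_n) (i : 'I_m) (e : 'rV[int]_n) :=
  pairing (p i) e = -1 /\ forall j, j != i -> 0 <= pairing (p j) e.

Definition demazure_root n m (p : 'I_m -> 'rV[int]_n) (e : 'rV[int]_n) :=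
  exists i, demazure_root_at p i e.

Definition compatible n m k (p : 'I_m -> 'rV[int]_n) (g : 'I_k -> 'I_m)
    (e1 e2 : 'I_k -> 'rV[int]_n) : Prop :=
  (forall r, demazure_root p (e1 r) /\ demazure_root p (e2 r)) /\
  (forall r s, pairing (p (g s)) (e1 r) = (if r == s then -1 else 0) /\
               pairing (p (g s)) (e2 r) = (if r == s then -1 else 0)).

(* K-points of X_sigma = Spec K[S_sigma]: monoid morphisms (S_sigma,+) -> (K,.),
   x u being the value of chi^u at the point; extended by 0 outside S_sigma
   (canonical representative).                                              *)
Definition is_point (K : fieldType) n m (p : 'I_m -> 'rV[int]_n)
    (x : 'rV[int]_n -> K) : Prop :=
  [/\ x 0 = 1,
      (forall u v, inS p u -> inS p v -> x (u + v) = x u * x v) &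
      (forall u, ~~ inS p u -> x u = 0)].

(* a_r(u) = <p_r, u> (as a natural number; u \in S_sigma) *)
Definition acoef n m k (p : 'I_m -> 'rV[int]_n) (g : 'I_k -> 'I_m) (r : 'I_k)
    (u : 'rV[int]_n) : nat := absz (pairing (p (g r)) u).

(* The multiplication of points induced by the comultiplication
   chi^u |-> sum_{i+j = a(u)} prod_r C(a_r(u), i_r)
                 chi^{u + sum_r i_r e2_r} (x) chi^{u + sum_r j_r e1_r},
   i.e. (x * y)(chi^u) = (x (x) y)(Delta chi^u).                            *)
Definition toric_mult (K : fieldType) n m k (p : 'I_m -> 'rV[int]_n)
    (g : 'I_k -> 'I_m) (e1 e2 : 'I_k -> 'rV[int]_n)
    (x y : 'rV[int]_n -> K) : 'rV[int]_n -> K :=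
  fun u =>
    if inS p u then
      \sum_(i : {ffun 'I_k -> 'I_(\sum_(r < k) acoef p g r u).+1}
              | [forall r, ((i r : nat) <= acoef p g r u)%N])
        (\prod_(r < k) ('C(acoef p g r u, i r))%:R)
        * x (u + \sum_(r < k) e2 r *+ i r)
        * y (u + \sum_(r < k) e1 r *+ (acoef p g r u - i r))
    else 0.

Definition relint_face n m k (p : 'I_m -> 'rV[int]_n) (g : 'I_k -> 'I_m)
    (u : 'rV[int]_n) : Prop :=
  forall j, ((exists r, g r = j) -> pairing (p j) u = 0) /\
            (~ (exists r, g r = j) -> 0 < pairing (p j) u).

Definition in_Xtau (K : fieldType) n m k (p : 'I_m -> 'rV[int]_n)
    (g : 'I_k -> 'I_m) (x : 'rV[int]_n -> K) : Prop :=
  is_point p x /\ forall u, relint_face p g u -> x u != 0.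

Definition inL n m k (p : 'I_m -> 'rV[int]_n) (g : 'I_k -> 'I_m)
    (u : 'rV[int]_n) : bool := [forall r, pairing (p (g r)) u == 0].

(* K-points of T = Hom(tau^perp \cap M, K^x), extended by 0 outside *)
Definition is_Tpoint (K : fieldType) n m k (p : 'I_m -> 'rV[int]_n)
    (g : 'I_k -> 'I_m) (t : 'rV[int]_n -> K) : Prop :=
  [/\ t 0 = 1,
      (forall l l', inL p g l -> inL p g l' -> t (l + l') = t l * t l'),
      (forall l, inL p g l -> t l != 0) &
      (forall u, ~~ inL p g u -> t u = 0)].

(* multiplication in G_chi = G_a^k \rtimes T, chi_r = e2_r - e1_r *)
Definition Gchi_mul (K : fieldType) n k (e1 e2 : 'I_k -> 'rV[int]_n)
    (a : ('I_k -> K) * ('rV[int]_n -> K)) (b : ('I_k -> K) * ('rV[int]_n -> K))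
    : ('I_k -> K) * ('rV[int]_n -> K) :=
  (fun r => a.1 r + a.2 (e2 r - e1 r) * b.1 r, fun u => a.2 u * b.2 u).

(* regular functions on G_chi = A^k x T, i.e. elements of K[a_1..a_k] (x) K[tau^perp \cap M] *)
Definition regular_on_G (K : fieldType) n m k (p : 'I_m -> 'rV[int]_n)
    (g : 'I_k -> 'I_m) (F : ('I_k -> K) * ('rV[int]_n -> K) -> K) : Prop :=
  exists s : seq ((('I_k -> nat) * 'rV[int]_n) * K),
    all (fun q => inL p g q.1.2) s /\
    forall a t, is_Tpoint p g t ->
      F (a, t) = \sum_(q <- s) q.2 * (\prod_(r < k) a r ^+ q.1.1 r) * t q.1.2.

(* regular functions on X_tau, i.e. elements of K[S_tau] = K[S_sigma][chi^{-u'}] *)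
Definition regular_on_Xtau (K : fieldType) n m k (p : 'I_m -> 'rV[int]_n)
    (g : 'I_k -> 'I_m) (F : ('rV[int]_n -> K) -> K) : Prop :=
  exists u', relint_face p g u' /\ inS p u' /\
  exists (N : nat) (s : seq ('rV[int]_n * K)),
    all (fun q => inS p q.1) s /\
    forall x, in_Xtau p g x -> F x * x u' ^+ N = \sum_(q <- s) q.2 * x q.1.

(* Write a(u) = (<p_1,u>, ..., <p_k,u>).  Compatibility of the roots means that
   u + sum_r i_r e2_r stays in S_sigma with face coordinates a(u) - i, and likewise
   for e1; so on points the product is a binomial sum over multi-indices i <= a(u).
   It sends points to points by the Vandermonde identity and is associative by
   C(A, a + b) C(a + b, a) = C(A, a) C(A - a, b).  The group G_chi maps into X by
   (a, t) |-> (chi^u |-> prod_r a_r^<p_r,u> t(u + sum_r <p_r,u> e1_r)), a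
   homomorphism by the binomial theorem.  At a relative interior point u' of
   tau^perp, a(u') = 0 and the product is pointwise, so units do not vanish at u',
   i.e. lie in X_tau.
   Conversely a point of X_tau extends to S_tau = S_sigma - N u', which inverts
   the map from G_chi. *)
From HB Require Import structures.
From mathcomp Require Import all_boot all_order all_algebra.
From mathcomp Require Import zify ring.
From Stdlib Require Import FunctionalExtensionality.
Set Implicit Arguments. Unset Strict Implicit. Unset Printing Implicit Defensive.
Import Order.TTheory GRing.Theory Num.Theory.
Local Open Scope ring_scope.

Lemma Zp_subK N (i j : 'I_N.+1) : ((i - j)%R + j = i + (i < j) * N.+1)%N.
Proof.
have /= -> : nat_of_ord (i - j)%R = ((i + (N.+1 - j)) %% N.+1)%N.
  by rewrite /= modnDmr.
have := ltn_ord i; have := ltn_ord j; case: (ltnP i j) => [lt_ij | le_ji] ltj lti.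
  by rewrite mul1n modn_small; lia.
have -> : (i + (N.+1 - j) = (i - j) + N.+1)%N by lia.
by rewrite mul0n modnDr modn_small; lia.
Qed.

Lemma Zp_addK N (i j : 'I_N.+1) : ((i + j)%R + (N < i + j) * N.+1 = i + j)%N.
Proof.
rewrite /=; have := ltn_ord i; have := ltn_ord j; case: (ltnP N (i + j)) => [lt_N | le_N] ltj lti.
  have -> : (i + j = (i + j - N.+1) + N.+1)%N by lia.
  by rewrite mul1n modnDr modn_small; lia.
by rewrite mul0n modn_small; lia.
Qed.

Lemma mul_bin_sub A a b : ('C(A, a + b) * 'C(a + b, a) = 'C(A, a) * 'C(A - a, b))%N.
Proof.
case: (leqP (a + b) A) => [le_abA | lt_Aab]; last first.
  rewrite bin_small // mul0n; case: (leqP a A) => [le_aA | /bin_small -> //].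
  by rewrite [X in (_ * X)%N]bin_small ?muln0 //; lia.
apply/eqP; rewrite -(eqn_pmul2r (_ : 0 < a`! * b`! * (A - a - b)`!)%N); last first.
  by rewrite !muln_gt0 !fact_gt0.
have factA := bin_fact le_abA.
have factab := bin_fact (leq_addr b a); rewrite addKn in factab.
have factAa := @bin_fact (A - a) b ltac:(lia).
rewrite (_ : A - (a + b) = A - a - b)%N in factA; last by lia.
apply/eqP; transitivity ('C(A, a + b) * ('C(a + b, a) * (a`! * b`!)) * (A - a - b)`!)%N.
  by ring.
rewrite factab -mulnA factA -(bin_fact (_ : a <= A)%N); last by lia.
by rewrite -factAa; ring.
Qed.

Section MultiBinomialSums.
Variables (R : comPzSemiRingType) (k : nat).
Implicit Types (N : nat) (A B : 'I_k -> nat) (F : ('I_k -> nat) -> R).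

Definition binom_weight A (i : 'I_k -> nat) : R := \prod_(r < k) 'C(A r, i r)%:R.

(* The binomial weights vanish outside i <= A, so any box containing A gives the
   same sum (box_sum_widen); binom_sum uses the box of toric_mult. *)
Definition box_sum N A F : R :=
  \sum_(i : {ffun 'I_k -> 'I_N.+1}) binom_weight A (fun r => i r) * F (fun r => i r).

Definition binom_sum A F : R := box_sum (\sum_(r < k) A r) A F.

Lemma binom_weight_eq0 A i r : (A r < i r)%N -> binom_weight A i = 0.
Proof. by move=> lt_Ai; rewrite /binom_weight (bigD1 r) //= bin_small // mul0r. Qed.

Lemma leq_sum_binom A r : (A r <= \sum_(s < k) A s)%N.
Proof. by rewrite (bigD1 r) //= leq_addr. Qed.

Lemma box_sum_widen N N' A F : (N <= N')%N -> (forall r, A r <= N)%N ->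
  box_sum N' A F = box_sum N A F.
Proof.
move=> le_NN' le_AN; rewrite /box_sum.
rewrite (bigID (fun i : {ffun 'I_k -> 'I_N'.+1} => [forall r, i r <= N]%N)) /=.
rewrite [X in _ + X]big1 ?addr0; last first.
  move=> i /forallPn [r]; rewrite -ltnNge => lt_Ni.
  by rewrite (@binom_weight_eq0 _ _ r) ?mul0r //; exact: leq_ltn_trans (le_AN r) lt_Ni.
have le_N1 : (N.+1 <= N'.+1)%N by [].
rewrite (reindex_onto (fun j : {ffun 'I_k -> 'I_N.+1} => [ffun r => widen_ord le_N1 (j r)])
          (fun i : {ffun 'I_k -> 'I_N'.+1} => [ffun r => inord (i r) : 'I_N.+1])) /=; last first.
  by move=> i /forallP le_iN; apply/ffunP => r; apply: val_inj; rewrite !ffunE /= inordK // ltnS.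
apply: eq_big => [j | j _].
  apply/andP; split; first by apply/forallP => r; rewrite ffunE /= -ltnS.
  by apply/eqP/ffunP => r; apply: val_inj; rewrite !ffunE /= inordK.
have -> : (fun r => nat_of_ord ([ffun r => widen_ord le_N1 (j r)] r)) = (fun r => j r).
  by apply: functional_extensionality => r; rewrite ffunE.
by [].
Qed.

Lemma binom_sumE N A F : (forall r, A r <= N)%N -> binom_sum A F = box_sum N A F.
Proof.
move=> le_AN; rewrite /binom_sum; case: (leqP N (\sum_(r < k) A r)) => [le | /ltnW le].
  by rewrite (box_sum_widen _ le).
by rewrite [RHS](box_sum_widen _ le) // => r; exact: leq_sum_binom.
Qed.

Lemma binom_weight_supp A i (c d : R) :
  ((forall r, i r <= A r)%N -> c = d) -> binom_weight A i * c = binom_weight A i * d.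
Proof.
case: (boolP [forall r, i r <= A r]%N) => [/forallP le_iA -> // | /forallPn [r]].
by rewrite -ltnNge => /binom_weight_eq0 ->; rewrite !mul0r.
Qed.

Lemma eq_binom_sum A F G :
  (forall i, (forall r, i r <= A r)%N -> F i = G i) -> binom_sum A F = binom_sum A G.
Proof. by move=> eqFG; apply: eq_bigr => i _; apply: binom_weight_supp; exact: eqFG. Qed.

Lemma binom_sum_mulr A F c : binom_sum A F * c = binom_sum A (fun i => F i * c).
Proof. by rewrite /binom_sum /box_sum big_distrl; apply: eq_bigr => i _; rewrite mulrA. Qed.

Lemma binom_sum_mull A F c : c * binom_sum A F = binom_sum A (fun i => c * F i).
Proof. by rewrite /binom_sum /box_sum big_distrr; apply: eq_bigr => i _; rewrite mulrCA. Qed.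

Lemma binom_sum1 A F (i0 : 'I_k -> nat) : (forall r, i0 r <= A r)%N ->
  (forall i, (forall r, i r <= A r)%N -> (exists r, i r != i0 r) -> F i = 0) ->
  binom_sum A F = binom_weight A i0 * F i0.
Proof.
move=> le_i0A F_eq0; rewrite /binom_sum /box_sum.
pose j0 : {ffun 'I_k -> 'I_(\sum_(r < k) A r).+1} := [ffun r => inord (i0 r)].
have j0E : (fun r => nat_of_ord (j0 r)) = i0.
  apply: functional_extensionality => r.
  by rewrite ffunE inordK // ltnS (leq_trans (le_i0A r) (leq_sum_binom A r)).
rewrite (bigD1 j0) //= j0E [X in _ + X]big1 ?addr0 // => i ne_ij0.
rewrite -[RHS](mulr0 (binom_weight A (fun r => i r))); apply: binom_weight_supp => le_iA.
apply: F_eq0 => //; apply/existsP/negP => /existsP ex_ne; move/negP: ne_ij0; apply.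
apply/eqP/ffunP => r; apply: val_inj; rewrite /= -[RHS]/((fun r => nat_of_ord (j0 r)) r) j0E.
by apply/eqP/negPn/negP => ne_r; apply: ex_ne; exists r.
Qed.

Lemma binom_sum0 F : binom_sum (fun _ => 0%N) F = F (fun _ => 0%N).
Proof.
rewrite (@binom_sum1 _ _ (fun _ => 0%N)) // => [|i le_i0 [r]]; last by rewrite -leqn0 le_i0.
by rewrite /binom_weight big1 ?mul1r // => r _; rewrite bin0.
Qed.

Lemma binom_sum_expand A (a b : 'I_k -> R) :
  binom_sum A (fun i => \prod_(r < k) (a r ^+ (A r - i r) * b r ^+ i r)) =
  \prod_(r < k) (a r + b r) ^+ A r.
Proof.
rewrite /binom_sum /box_sum; set N := (\sum_(r < k) A r).
under eq_bigr do rewrite -big_split /=.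
rewrite -(bigA_distr_bigA (fun r (x : 'I_N.+1) =>
  'C(A r, x)%:R * (a r ^+ (A r - x) * b r ^+ x))).
apply: eq_bigr => r _.
rewrite exprDn (big_ord_widen N.+1 (fun i => a r ^+ (A r - i) * b r ^+ i *+ 'C(A r, i)));
  last by rewrite ltnS leq_sum_binom.
rewrite [RHS]big_mkcond /=; apply: eq_bigr => x _; case: ifP => [_ | /negbT].
  by rewrite mulr_natl.
by rewrite -leqNgt => /bin_small ->; rewrite ?mul0r ?mulr0n.
Qed.

Lemma Zp_Vandermonde N a b (I : 'I_N.+1) : (a + b <= N)%N ->
  \sum_(x < N.+1) 'C(a, (I - x)%R)%:R * 'C(b, x)%:R = 'C(a + b, I)%:R :> R.
Proof.
move=> le_abN; rewrite addnC -binomial.Vandermonde natr_sum.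
rewrite (big_ord_widen N.+1 (fun j => ('C(b, j) * 'C(a, I - j))%:R)) //.
rewrite [RHS]big_mkcond; apply: eq_bigr => x _; rewrite ltnS -natrM.
have := Zp_subK I x; move: (nat_of_ord (I - x)%R) => v.
case: (leqP x I) => [le_xI | lt_Ix] subK; rewrite /= ?mul0n ?mul1n ?addn0 in subK.
  have -> : v = (I - x)%N by lia.
  by rewrite mulnC.
case: (leqP x b) => [le_xb | /bin_small ->]; last by rewrite muln0.
by rewrite bin_small //; have := ltn_ord I; lia.
Qed.

Lemma binom_sum_Vandermonde A B F :
  binom_sum A (fun i => binom_sum B (fun j => F (fun r => i r + j r)%N)) =
  binom_sum (fun r => A r + B r)%N F.
Proof.
set N := (\sum_(r < k) (A r + B r))%N.
have le_ABN r : (A r + B r <= N)%N by exact: leq_sum_binom (fun r => A r + B r)%N r.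
have le_AN r : (A r <= N)%N by have := le_ABN r; lia.
have le_BN r : (B r <= N)%N by have := le_ABN r; lia.
rewrite (binom_sumE _ le_AN) [RHS](binom_sumE _ le_ABN) /box_sum.
under eq_bigr do rewrite (binom_sumE _ le_BN).
have subj_inj (j : {ffun 'I_k -> 'I_N.+1}) : injective (fun I => I - j).
  by move=> x y /(congr1 (fun z => z + j)); rewrite !subrK.
under eq_bigr do rewrite big_distrr /=.
rewrite exchange_big /=.
under eq_bigr => j _ do rewrite (reindex_inj (subj_inj j)) /=.
rewrite exchange_big /=; apply: eq_bigr => I _.
transitivity (\sum_(j : {ffun 'I_k -> 'I_N.+1})
    binom_weight A (fun r => (I - j) r) * binom_weight B (fun r => j r) * F (fun r => I r)).
  apply: eq_bigr => j _; rewrite -mulrA.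
  apply: binom_weight_supp => le_A; apply: binom_weight_supp => le_B.
  congr F; apply: functional_extensionality => r.
  have := le_A r; have := le_B r; have := le_ABN r; have := Zp_subK (I r) (j r).
  rewrite !ffunE; move: (nat_of_ord (I r - j r)%R) => v.
  by case: ltnP => _ /=; lia.
rewrite -big_distrl /=; congr (_ * _).
rewrite /binom_weight; under eq_bigr do rewrite -big_split /=.
under eq_bigr => j _ do under eq_bigr => r _ do rewrite !ffunE.
rewrite -(bigA_distr_bigA (fun r (x : 'I_N.+1) => 'C(A r, (I r - x)%R)%:R * 'C(B r, x)%:R)).
by apply: eq_bigr => r _; rewrite Zp_Vandermonde.
Qed.

Lemma binom_weight_sub A a b :
  binom_weight A (fun r => a r + b r)%N * binom_weight (fun r => a r + b r)%N a =
  binom_weight A a * binom_weight (fun r => A r - a r)%N b.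
Proof.
by rewrite /binom_weight -!big_split; apply: eq_bigr => r _ /=; rewrite -!natrM mul_bin_sub.
Qed.

Lemma binom_sum_trinomial A (F : ('I_k -> nat) -> ('I_k -> nat) -> R) :
  binom_sum A (fun i => binom_sum (fun r => A r - i r)%N (F i)) =
  binom_sum A (fun I => binom_sum I (fun j => F j (fun r => I r - j r)%N)).
Proof.
set N := (\sum_(r < k) A r)%N; have le_AN r : (A r <= N)%N := leq_sum_binom A r.
rewrite (eq_binom_sum (G := fun i => box_sum N (fun r => A r - i r)%N (F i))); last first.
  by move=> i _; apply: binom_sumE => r; exact: leq_trans (leq_subr _ _) (le_AN r).
rewrite [RHS](eq_binom_sum (G := fun I => box_sum N I (fun j => F j (fun r => I r - j r)%N)));
  last by move=> I le_IA; apply: binom_sumE => r; exact: leq_trans (le_IA r) (le_AN r).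
have addj_inj (j : {ffun 'I_k -> 'I_N.+1}) : injective (fun x => x + j).
  by move=> x y /(congr1 (fun z => z - j)); rewrite !addrK.
rewrite /binom_sum /box_sum -/N.
under eq_bigr do rewrite big_distrr /=.
under [RHS]eq_bigr do rewrite big_distrr /=.
rewrite [RHS]exchange_big /=.
under [RHS]eq_bigr => j _ do rewrite (reindex_inj (addj_inj j)) /=.
apply: eq_bigr => a _; apply: eq_bigr => b _.
case: (boolP [forall r, b r + a r <= N]%N) => [/forallP no_wrap | /forallPn [r]].
  have vE r : nat_of_ord ((b + a) r) = (a r + b r)%N.
    have := Zp_addK (b r) (a r); have := no_wrap r; rewrite ffunE.
    by case: ltnP => //= _; lia.
  rewrite (_ : (fun r => nat_of_ord ((b + a) r)) = (fun r => a r + b r)%N); last first.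
    by apply: functional_extensionality => r; rewrite vE.
  rewrite [RHS]mulrA binom_weight_sub -mulrA; congr (_ * (_ * F _ _)).
  by apply: functional_extensionality => r; rewrite vE addKn.
rewrite -ltnNge => wrap; rewrite mulrA -binom_weight_sub (binom_weight_eq0 (r := r)); last first.
  by have := le_AN r; lia.
rewrite mul0r mul0r mulrCA (binom_weight_eq0 (r := r)) ?mul0r ?mulr0 //.
have := Zp_addK (b r) (a r); have := ltn_ord (b r); rewrite ffunE wrap /=.
by move: (nat_of_ord _) => v; lia.
Qed.

End MultiBinomialSums.

Arguments binom_weight {R k} A i.
Arguments box_sum {R k} N A F.
Arguments binom_weight_eq0 {R k A i} r.

Section MorphismOnSubmonoid.
Variables (T : nmodType) (R : comPzSemiRingType) (P : pred T) (f : T -> R).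
Hypotheses (P0 : P 0) (PD : forall u v, P u -> P v -> P (u + v)).
Hypotheses (f0 : f 0 = 1) (fD : forall u v, P u -> P v -> f (u + v) = f u * f v).

Lemma closedMn u c : P u -> P (u *+ c).
Proof. by move=> Pu; elim: c => [|c IHc]; rewrite ?mulr0n ?mulrS ?PD. Qed.

Lemma morph_onMn u c : P u -> f (u *+ c) = f u ^+ c.
Proof.
by move=> Pu; elim: c => [|c IHc]; rewrite ?mulr0n ?expr0 ?mulrS ?exprS ?fD ?IHc ?closedMn.
Qed.

Lemma morph_on_comb k (c : 'I_k -> T) (i : 'I_k -> nat) : (forall r, P (c r)) ->
  P (\sum_(r < k) c r *+ i r) /\ f (\sum_(r < k) c r *+ i r) = \prod_(r < k) f (c r) ^+ i r.
Proof.
move=> Pc; elim/big_rec2: _ => [|r u a _ [Pu fu]]; first by [].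
by rewrite PD ?fD ?morph_onMn ?fu ?closedMn.
Qed.

End MorphismOnSubmonoid.

Fact pairingB n (v : 'rV[int]_n) : {morph pairing v : u w / u - w}.
Proof. by move=> u w; rewrite /pairing -sumrB; apply: eq_bigr => i _; rewrite !mxE mulrBr. Qed.

HB.instance Definition _ n (v : 'rV[int]_n) :=
  GRing.isZmodMorphism.Build 'rV[int]_n int (pairing v) (@pairingB n v).

Section Cone.
Variables (n m k : nat) (p : 'I_m -> 'rV[int]_n) (g : 'I_k -> 'I_m).

Local Notation V := 'rV[int]_n.
Local Notation pr j := (pairing (p j)).

Definition acoefs (u : V) : 'I_k -> nat := fun r => acoef p g r u.

Definition inStau (w : V) : bool := [forall s, 0 <= pr (g s) w].

Definition comb (e : 'I_k -> V) (i : 'I_k -> nat) : V := \sum_(r < k) e r *+ i r.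

Lemma inS0 : inS p 0.
Proof. by apply/forallP => j; rewrite raddf0 /=. Qed.

Lemma inSD u v : inS p u -> inS p v -> inS p (u + v).
Proof.
by move=> /forallP Su /forallP Sv; apply/forallP => j; rewrite raddfD /= addr_ge0 ?Su ?Sv.
Qed.

Lemma inL0 : inL p g 0.
Proof. by apply/forallP => s; rewrite raddf0 /=. Qed.

Lemma inLP l : reflect (forall s, pr (g s) l = 0) (inL p g l).
Proof. by apply: (iffP forallP) => L s; apply/eqP. Qed.

Lemma inLD l l' : inL p g l -> inL p g l' -> inL p g (l + l').
Proof. by move=> /inLP L /inLP L'; apply/inLP => s; rewrite raddfD /= L L' addr0. Qed.

Lemma inStau0 : inStau 0.
Proof. by apply/forallP => s; rewrite raddf0 /=. Qed.

Lemma inStauD w w' : inStau w -> inStau w' -> inStau (w + w').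
Proof. by move=> /forallP S /forallP S'; apply/forallP => s; rewrite raddfD /= addr_ge0 ?S ?S'. Qed.

Lemma inL_Stau l : inL p g l -> inStau l.
Proof. by move=> /inLP L; apply/forallP => s; rewrite L. Qed.

Lemma inL_comb c i : (forall r, inL p g (c r)) -> inL p g (comb c i).
Proof.
move=> Lc; rewrite /comb; elim/big_rec: _ => [|r l _ Ll]; first exact: inL0.
by rewrite inLD // (closedMn inL0 inLD).
Qed.

Lemma acoefE u r : inS p u -> (acoefs u r)%:Z = pr (g r) u.
Proof. by move/forallP => Su; rewrite /acoefs /acoef abszE ger0_norm. Qed.

Lemma acoefs0 : acoefs 0 = (fun _ => 0%N).
Proof. by apply: functional_extensionality => r; rewrite /acoefs /acoef raddf0 /=. Qed.

Lemma acoefsD u v : inS p u -> inS p v -> acoefs (u + v) = (fun r => acoefs u r + acoefs v r)%N.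
Proof.
move=> Su Sv; apply: functional_extensionality => r.
by apply/eqP; rewrite -eqz_nat PoszD !acoefE ?raddfD /= //; exact: inSD.
Qed.

Lemma is_face_relint : is_face p g -> exists u, relint_face p g u.
Proof.
case=> _ [u [Su face_u]]; exists u => j; split=> [/(face_u j).1 // | not_face].
by rewrite lt_def (forallP Su j) andbT; apply/eqP => /(face_u j).2.
Qed.

Lemma relint_inS u : relint_face p g u -> inS p u.
Proof.
move=> relu; apply/forallP => j.
case: (pickP (fun s => g s == j)) => [s /eqP gs | not_face].
  by rewrite ((relu j).1 (ex_intro _ s gs)).
by apply/ltW/(relu j).2 => -[s gs]; move: (not_face s); rewrite gs eqxx.
Qed.

Lemma relint_inL u : relint_face p g u -> inL p g u.
Proof. by move=> relu; apply/inLP => s; apply: (relu (g s)).1; exists s. Qed.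

Lemma relint_acoefs u : relint_face p g u -> acoefs u = (fun _ => 0%N).
Proof.
move=> relu; apply: functional_extensionality => r.
by rewrite /acoefs /acoef (inLP _ (relint_inL relu)).
Qed.

Lemma combD e i j : comb e (fun r => i r + j r)%N = comb e i + comb e j.
Proof. by rewrite /comb -big_split; apply: eq_bigr => r _; rewrite mulrnDr. Qed.

Lemma comb0 e : comb e (fun _ => 0%N) = 0.
Proof. by rewrite /comb big1 // => r _; rewrite mulr0n. Qed.

Lemma combB e e' i : comb (fun r => e r - e' r) i = comb e i - comb e' i.
Proof. by rewrite /comb -sumrB; apply: eq_bigr => r _; rewrite mulrnBl. Qed.

Lemma combN e i : comb (fun r => - e r) i = - comb e i.
Proof. by rewrite /comb -sumrN; apply: eq_bigr => r _; rewrite mulNrn. Qed.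

Lemma comb_delta e r : comb e (fun s => (r == s) : nat) = e r.
Proof.
rewrite /comb (bigD1 r) //= eqxx mulr1n big1 ?addr0 // => s ne_sr.
by rewrite eq_sym (negbTE ne_sr) mulr0n.
Qed.

(* The only properties of a compatible family of Demazure roots that are used. *)
Definition face_roots (e : 'I_k -> V) :=
  (forall r s, pr (g s) (e r) = if r == s then -1 else 0) /\
  (forall r j, j != g r -> 0 <= pr j (e r)).

Lemma compatible_face_roots e1 e2 :
  compatible p g e1 e2 -> face_roots e1 /\ face_roots e2.
Proof.
have roots (e : 'I_k -> V) : (forall r, demazure_root p (e r)) ->
    (forall r s, pr (g s) (e r) = if r == s then -1 else 0) -> face_roots e.
  move=> root_e face_e; split => // r j ne_jg.
  have [i0 [ei0 e_ge0]] := root_e r.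
  case: (eqVneq i0 (g r)) => [eq_i0g | ne_i0g]; first by apply: e_ge0; rewrite eq_i0g.
  by have := e_ge0 (g r); rewrite eq_sym ne_i0g face_e eqxx => /(_ isT).
move=> [roots12 face12]; split; apply: roots => r.
- exact: (roots12 r).1.
- by move=> s; exact: (face12 r s).1.
- exact: (roots12 r).2.
- by move=> s; exact: (face12 r s).2.
Qed.

Section FaceRoots.
Variable e : 'I_k -> V.
Hypothesis roots_e : face_roots e.

Lemma pairing_comb_face s i : pr (g s) (comb e i) = - (i s)%:Z.
Proof.
rewrite raddf_sum /= (bigD1 s) //= raddfMn /= roots_e.1 eqxx big1 ?addr0 ?mulNrn ?natz //.
by move=> r ne_rs; rewrite raddfMn /= roots_e.1 (negbTE ne_rs) mul0rn.
Qed.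

Lemma pairing_comb_ge0 j i : (forall s, g s != j) -> 0 <= pr j (comb e i).
Proof.
move=> not_face; rewrite raddf_sum /= sumr_ge0 // => r _.
by rewrite raddfMn /= mulrn_wge0 // roots_e.2 // eq_sym.
Qed.

Lemma inS_comb u i : inS p u -> (forall r, i r <= acoefs u r)%N -> inS p (u + comb e i).
Proof.
move=> Su le_iu; apply/forallP => j; rewrite raddfD /=.
case: (pickP (fun s => g s == j)) => [s /eqP <- | not_face].
  by rewrite pairing_comb_face -acoefE // subr_ge0 lez_nat.
by rewrite addr_ge0 ?(forallP Su j) // pairing_comb_ge0 // => s; rewrite not_face.
Qed.

Lemma acoefs_comb u i : inS p u -> (forall r, i r <= acoefs u r)%N ->
  acoefs (u + comb e i) = (fun r => acoefs u r - i r)%N.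
Proof.
move=> Su le_iu; apply: functional_extensionality => r.
by rewrite {1}/acoefs /acoef raddfD /= pairing_comb_face -acoefE // subzn.
Qed.

Lemma inL_comb_acoefs u : inS p u -> inL p g (u + comb e (acoefs u)).
Proof. by move=> Su; apply/inLP => s; rewrite raddfD /= pairing_comb_face acoefE // subrr. Qed.

Lemma acoefs_comb_sub u i : inS p u -> (forall r, i r <= acoefs u r)%N ->
  acoefs (u + comb e (fun r => acoefs u r - i r)%N) = i.
Proof.
move=> Su le_iu; rewrite acoefs_comb // => [|r]; last exact: leq_subr.
by apply: functional_extensionality => r; rewrite subKn.
Qed.

Lemma inStau_opp_root r : inStau (- e r).
Proof. by apply/forallP => s; rewrite raddfN /= roots_e.1; case: eqP. Qed.

Lemma inStau_opp_comb i : inStau (- comb e i).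
Proof. by apply/forallP => s; rewrite raddfN /= pairing_comb_face opprK. Qed.

End FaceRoots.

Lemma inL_face_roots_sub e e' r : face_roots e -> face_roots e' -> inL p g (e r - e' r).
Proof.
by move=> roots_e roots_e'; apply/inLP => s; rewrite raddfB /= roots_e.1 roots_e'.1 subrr.
Qed.

Section ToricMonoid.
Variables (K : fieldType) (e1 e2 : 'I_k -> V).
Hypotheses (roots1 : face_roots e1) (roots2 : face_roots e2).

Local Notation mult := (@toric_mult K n m k p g e1 e2).

Lemma toric_multE (x y : V -> K) u : inS p u -> mult x y u =
  binom_sum (acoefs u) (fun i => x (u + comb e2 i) * y (u + comb e1 (fun r => acoefs u r - i r)%N)).
Proof.
move=> Su; rewrite /toric_mult Su /binom_sum /box_sum big_mkcond; apply: eq_bigr => i _.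
case: ifP => [_ | /negbT /forallPn [r]]; first by rewrite mulrA.
by rewrite -ltnNge => lt_ir; rewrite (binom_weight_eq0 r) ?mul0r.
Qed.

Lemma point_mult x y : is_point p x -> is_point p y -> is_point p (mult x y).
Proof.
move=> [x0 xD x_out] [y0 yD y_out]; split.
- by rewrite toric_multE ?inS0 // acoefs0 binom_sum0 comb0 /= sub0n comb0 addr0 x0 y0 mulr1.
- move=> u v Su Sv; rewrite !toric_multE ?inSD // (acoefsD Su Sv).
  rewrite -binom_sum_Vandermonde binom_sum_mulr; apply: eq_binom_sum => i le_iu.
  rewrite binom_sum_mull; apply: eq_binom_sum => j le_jv.
  have Se2u := inS_comb roots2 Su le_iu; have Se2v := inS_comb roots2 Sv le_jv.
  have Se1u := inS_comb roots1 Su (fun r => leq_subr (i r) _).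
  have Se1v := inS_comb roots1 Sv (fun r => leq_subr (j r) _).
  rewrite combD (_ : (fun r => _ - _) = (fun r => (acoefs u r - i r) + (acoefs v r - j r)))%N;
    last by apply: functional_extensionality => r; have := le_iu r; have := le_jv r; lia.
  by rewrite combD !(addrACA u v) (xD _ _ Se2u Se2v) (yD _ _ Se1u Se1v) mulrACA.
- by move=> u /negbTE S'u; rewrite /toric_mult S'u.
Qed.

Lemma mult_assoc x y z : mult (mult x y) z = mult x (mult y z).
Proof.
apply: functional_extensionality => u.
case: (boolP (inS p u)) => [Su | /negbTE S'u]; last by rewrite /toric_mult S'u.
rewrite !toric_multE //; set A := acoefs u.
transitivity (binom_sum A (fun i => binom_sum (fun r => A r - i r)%N (fun j =>
    x (u + comb e2 i + comb e2 j) * y (u + comb e2 i + comb e1 (fun r => A r - i r - j r)%N) *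
    z (u + comb e1 (fun r => A r - i r)%N)))).
  apply: eq_binom_sum => i le_iA.
  by rewrite toric_multE ?(inS_comb roots2) // (acoefs_comb roots2 Su le_iA) binom_sum_mulr.
rewrite binom_sum_trinomial; apply: eq_binom_sum => I le_IA.
rewrite toric_multE ?(inS_comb roots1 Su (fun r => leq_subr (I r) _)) //.
rewrite (acoefs_comb_sub roots1 Su le_IA) binom_sum_mull; apply: eq_binom_sum => j le_jI /=.
have e2E : comb e2 j + comb e2 (fun r => I r - j r)%N = comb e2 I.
  by rewrite -combD; congr comb; apply: functional_extensionality => r; have := le_jI r; lia.
have e1E : comb e1 (fun r => A r - I r)%N + comb e1 (fun r => I r - j r)%N =
           comb e1 (fun r => A r - j r)%N.
  rewrite -combD; congr comb; apply: functional_extensionality => r.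
  by have := le_jI r; have := le_IA r; lia.
rewrite (_ : (fun r => A r - j r - (I r - j r))%N = (fun r => A r - I r)%N); last first.
  by apply: functional_extensionality => r; have := le_jI r; have := le_IA r; lia.
by rewrite -addrA e2E -[u + comb e1 _ + comb e1 _]addrA e1E addrAC mulrA.
Qed.

Lemma Tpoint_comb (t : V -> K) c i : is_Tpoint p g t -> (forall r, inL p g (c r)) ->
  t (comb c i) = \prod_(r < k) t (c r) ^+ i r.
Proof. by move=> [t0 tD _ _] Lc; case: (morph_on_comb inL0 inLD t0 tD i Lc). Qed.

Definition one_T : V -> K := fun l => (inL p g l)%:R.

Lemma one_T_Tpoint : is_Tpoint p g one_T.
Proof.
rewrite /one_T; split.
- by rewrite inL0.
- by move=> l l' Ll Ll'; rewrite inLD // Ll Ll' mulr1.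
- by move=> l ->; exact: oner_neq0.
- by move=> l /negbTE ->.
Qed.

(* [u + comb e1 (acoefs u)] is the projection of u to tau^perp along the roots e1. *)
Definition point_of_Gchi (at_ : ('I_k -> K) * (V -> K)) : V -> K := fun u =>
  if inS p u then (\prod_(r < k) at_.1 r ^+ acoefs u r) * at_.2 (u + comb e1 (acoefs u)) else 0.

Lemma point_of_GchiE a t u : inS p u ->
  point_of_Gchi (a, t) u = (\prod_(r < k) a r ^+ acoefs u r) * t (u + comb e1 (acoefs u)).
Proof. by move=> Su; rewrite /point_of_Gchi Su. Qed.

Definition eps : V -> K := point_of_Gchi (fun _ => 0, one_T).

Lemma epsE u : inS p u -> eps u = \prod_(r < k) (acoefs u r == 0%N)%:R.
Proof.
move=> Su; rewrite /eps point_of_GchiE // /one_T inL_comb_acoefs // mulr1.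
by apply: eq_bigr => r _; case: (acoefs u r) => [|a]; rewrite ?expr0 ?exprS ?mul0r.
Qed.

Lemma point_of_Gchi_point a t : is_Tpoint p g t -> is_point p (point_of_Gchi (a, t)).
Proof.
move=> [t0 tD _ _]; split=> [|u v Su Sv|u /negbTE S'u]; last by rewrite /point_of_Gchi S'u.
  by rewrite point_of_GchiE ?inS0 // acoefs0 comb0 addr0 t0 mulr1 big1 // => r _; rewrite expr0.
rewrite !point_of_GchiE ?inSD // (acoefsD Su Sv) combD addrACA.
rewrite (tD _ _ (inL_comb_acoefs roots1 Su) (inL_comb_acoefs roots1 Sv)) mulrACA -big_split /=.
by congr (_ * _); apply: eq_bigr => r _; rewrite exprD.
Qed.

Lemma point_of_Gchi_mul a t a' t' : is_Tpoint p g t -> is_Tpoint p g t' ->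
  point_of_Gchi (Gchi_mul e1 e2 (a, t) (a', t')) =
  mult (point_of_Gchi (a, t)) (point_of_Gchi (a', t')).
Proof.
move=> Tt Tt'; have [_ tD _ _] := Tt.
apply: functional_extensionality => u.
case: (boolP (inS p u)) => [Su | /negbTE S'u]; last by rewrite /toric_mult /point_of_Gchi S'u.
rewrite point_of_GchiE // toric_multE //=.
rewrite -(binom_sum_expand (acoefs u) a (fun r => t (e2 r - e1 r) * a' r)) binom_sum_mulr.
apply: eq_binom_sum => i le_iu.
rewrite !point_of_GchiE ?(inS_comb roots2) ?(inS_comb roots1 Su (fun r => leq_subr (i r) _)) //.
rewrite (acoefs_comb roots2 Su le_iu) (acoefs_comb_sub roots1 Su le_iu).
have e1E : comb e1 (fun r => acoefs u r - i r)%N + comb e1 i = comb e1 (acoefs u).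
  by rewrite -combD; congr comb; apply: functional_extensionality => r; rewrite subnK.
have L_chi r : inL p g (e2 r - e1 r) := inL_face_roots_sub r roots2 roots1.
have -> : u + comb e2 i + comb e1 (fun r => acoefs u r - i r)%N =
          u + comb e1 (acoefs u) + comb (fun r => e2 r - e1 r) i.
  by rewrite combB -e1E [u + (_ + _)]addrA addrACA subrr addr0 addrAC.
rewrite -[u + comb e1 _ + comb e1 i]addrA e1E.
rewrite (tD _ _ (inL_comb_acoefs roots1 Su) (inL_comb i L_chi)) (Tpoint_comb _ Tt L_chi).
rewrite (eq_bigr (fun r => a r ^+ (acoefs u r - i r) * (t (e2 r - e1 r) ^+ i r * a' r ^+ i r))).
  by rewrite !big_split /=; ring.
by move=> r _; rewrite exprMn.
Qed.

Lemma eps_point : is_point p eps.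
Proof. exact/point_of_Gchi_point/one_T_Tpoint. Qed.

Lemma mult_eps_l x : is_point p x -> mult eps x = x.
Proof.
move=> [_ _ x_out]; apply: functional_extensionality => u.
case: (boolP (inS p u)) => [Su | S'u]; last by rewrite /toric_mult (negbTE S'u) x_out.
rewrite toric_multE // (binom_sum1 (i0 := acoefs u)) // => [|i le_iu [r ne_ir]].
  rewrite (_ : (fun r => acoefs u r - acoefs u r)%N = (fun _ => 0%N)); last first.
    by apply: functional_extensionality => r; rewrite subnn.
  rewrite comb0 addr0 epsE ?(inS_comb roots2) // (acoefs_comb roots2 Su) //.
  by rewrite /binom_weight !big1 ?mul1r // => r _; rewrite ?binn ?subnn.
rewrite epsE ?(inS_comb roots2) // (acoefs_comb roots2 Su le_iu) (bigD1 r) //=.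
by rewrite subn_eq0 leqNgt ltn_neqAle ne_ir le_iu !mul0r.
Qed.

Lemma mult_eps_r x : is_point p x -> mult x eps = x.
Proof.
move=> [_ _ x_out]; apply: functional_extensionality => u.
case: (boolP (inS p u)) => [Su | S'u]; last by rewrite /toric_mult (negbTE S'u) x_out.
rewrite toric_multE // (binom_sum1 (i0 := fun _ => 0%N)) // => [|i le_iu [r ne_ir]].
  rewrite /= comb0 addr0 (_ : (fun r => acoefs u r - 0)%N = acoefs u); last first.
    by apply: functional_extensionality => r; rewrite subn0.
  rewrite epsE ?(inS_comb roots1) // (acoefs_comb roots1 Su) //.
  by rewrite /binom_weight !big1 ?mul1r ?mulr1 // => r _; rewrite ?bin0 ?subnn.
rewrite epsE ?(inS_comb roots1 Su (fun r => leq_subr (i r) _)) // (acoefs_comb_sub roots1 Su le_iu).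
by rewrite (bigD1 r) //= (negbTE ne_ir) !mul0r mulr0.
Qed.

Lemma mult_relint x y u : relint_face p g u -> mult x y u = x u * y u.
Proof.
move=> relu; rewrite toric_multE ?relint_inS // relint_acoefs // binom_sum0 /=.
by rewrite !comb0 !addr0.
Qed.

Lemma eps_relint u : relint_face p g u -> eps u = 1.
Proof.
by move=> relu; rewrite epsE ?relint_inS // relint_acoefs // big1.
Qed.

Lemma unit_in_Xtau x : is_point p x ->
  (exists y, is_point p y /\ mult x y = eps /\ mult y x = eps) -> in_Xtau p g x.
Proof.
move=> Px [y [_ [xy_eps _]]]; split=> // u relu; apply/eqP => xu0.
have := congr1 (fun f => f u) xy_eps; rewrite /= mult_relint // eps_relint // xu0 mul0r.
by move/eqP; rewrite eq_sym oner_eq0.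
Qed.

Lemma point_of_Gchi_Xtau a t : is_Tpoint p g t -> in_Xtau p g (point_of_Gchi (a, t)).
Proof.
move=> Tt; split=> [|u relu]; first exact: point_of_Gchi_point.
rewrite point_of_GchiE ?relint_inS // relint_acoefs // comb0 addr0 big1 ?mul1r //.
by have [_ _ t_neq0 _] := Tt; apply: t_neq0; exact: relint_inL.
Qed.

Lemma regular_point_of_Gchi u : inS p u -> regular_on_G p g (fun at_ => point_of_Gchi at_ u).
Proof.
move=> Su; exists [:: (acoefs u, u + comb e1 (acoefs u), 1)]; split.
  by rewrite /= inL_comb_acoefs.
by move=> a t _; rewrite big_seq1 mul1r point_of_GchiE.
Qed.

Section Extension.
Variable u' : V.
Hypothesis relint_u' : relint_face p g u'.

Definition shift_bound (w : V) : nat := (\sum_(j < m) `|pr j w|)%N.+1.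

Lemma shift_inS w N : inStau w -> (shift_bound w <= N)%N -> inS p (w + u' *+ N).
Proof.
move=> /forallP Sw le_wN; apply/forallP => j; rewrite raddfD raddfMn /=.
case: (pickP (fun s => g s == j)) => [s /eqP <- | not_face].
  by rewrite (inLP _ (relint_inL relint_u')) mul0rn addr0.
have pos_u' : 0 < pr j u' by apply: (relint_u' j).2 => -[s gs]; move: (not_face s); rewrite gs eqxx.
have : (`|pr j w| < shift_bound w)%N by rewrite ltnS (bigD1 j) //= leq_addr.
by nia.
Qed.

Lemma shift_relint l N : inL p g l -> (shift_bound l <= N)%N -> relint_face p g (l + u' *+ N).
Proof.
move=> Ll le_lN j; split.
  move=> [s <-]; rewrite raddfD raddfMn /= (inLP _ Ll).
  by rewrite (inLP _ (relint_inL relint_u')) mul0rn addr0.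
move=> not_face; rewrite raddfD raddfMn /=; have pos_u' := (relint_u' j).2 not_face.
have : (`|pr j l| < shift_bound l)%N by rewrite ltnS (bigD1 j) //= leq_addr.
by nia.
Qed.

Lemma shift_boundD w w' : (shift_bound (w + w') <= shift_bound w + shift_bound w')%N.
Proof.
suff : (\sum_(j < m) `|pr j (w + w')| <= \sum_(j < m) `|pr j w| + \sum_(j < m) `|pr j w'|)%N.
  by rewrite /shift_bound; lia.
by rewrite -big_split leq_sum // => j _; rewrite raddfD /=; lia.
Qed.

(* A point of X_tau extends to the monoid S_tau = S_sigma - N u', by
   chi^w |-> x(w + N u') / x(u')^N for N large. *)
Definition extend (x : V -> K) (w : V) : K :=
  x (w + u' *+ shift_bound w) / x u' ^+ shift_bound w.

Lemma inS_u'Mn N : inS p (u' *+ N).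
Proof. exact/(closedMn inS0 inSD)/relint_inS. Qed.

Section ExtendPoint.
Variable x : V -> K.
Hypotheses (Px : is_point p x) (xu'_neq0 : x u' != 0).

Lemma point_u'Mn N : x (u' *+ N) = x u' ^+ N.
Proof. by case: Px => x0 xD _; apply: (morph_onMn inS0 inSD x0 xD); exact: relint_inS. Qed.

Lemma extendE w N : inStau w -> (shift_bound w <= N)%N -> extend x w = x (w + u' *+ N) / x u' ^+ N.
Proof.
case: Px => _ xD _ Sw le_wN; rewrite /extend -(subnKC le_wN) mulrnDr addrA.
rewrite [in RHS]xD ?shift_inS ?inS_u'Mn // point_u'Mn exprD invfM.
by rewrite mulrACA divff ?mulr1 // expf_neq0.
Qed.

Lemma extend_inS w : inS p w -> extend x w = x w.
Proof.
case: Px => _ xD _ Sw; rewrite /extend (xD _ _ Sw (inS_u'Mn _)).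
by rewrite point_u'Mn mulfK // expf_neq0.
Qed.

Lemma extend0 : extend x 0 = 1.
Proof. by rewrite extend_inS ?inS0 //; case: Px. Qed.

Lemma extendD w w' : inStau w -> inStau w' -> extend x (w + w') = extend x w * extend x w'.
Proof.
case: Px => _ xD _ Sw Sw'; rewrite (extendE (inStauD Sw Sw') (shift_boundD w w')).
rewrite mulrnDr addrACA xD ?shift_inS //.
by rewrite exprD invfM mulrACA.
Qed.

Lemma extend_comb c i : (forall r, inStau (c r)) ->
  extend x (comb c i) = \prod_(r < k) extend x (c r) ^+ i r.
Proof. by move=> Sc; case: (morph_on_comb inStau0 inStauD extend0 extendD i Sc). Qed.

End ExtendPoint.

Definition Gchi_of_point (x : V -> K) : ('I_k -> K) * (V -> K) :=
  (fun r => extend x (- e1 r), fun l => if inL p g l then extend x l else 0).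

Lemma Gchi_of_point_T x : in_Xtau p g x -> is_Tpoint p g (Gchi_of_point x).2.
Proof.
move=> [Px x_neq0]; have xu' := x_neq0 u' relint_u'; rewrite /Gchi_of_point /=; split.
- by rewrite inL0 extend0.
- by move=> l l' Ll Ll'; rewrite inLD // Ll Ll' extendD // inL_Stau.
- move=> l Ll; rewrite Ll /extend mulf_neq0 ?invr_eq0 ?expf_neq0 //.
  by apply: x_neq0; exact: shift_relint.
- by move=> l /negbTE ->.
Qed.

Lemma point_of_GchiK x : in_Xtau p g x -> point_of_Gchi (Gchi_of_point x) = x.
Proof.
move=> [Px x_neq0]; have xu' := x_neq0 u' relint_u'; have [_ _ x_out] := Px.
apply: functional_extensionality => u.
case: (boolP (inS p u)) => [Su | /negbTE S'u]; last by rewrite /point_of_Gchi S'u x_out ?S'u.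
rewrite /Gchi_of_point point_of_GchiE //= inL_comb_acoefs //.
rewrite -(extend_comb Px xu' _ (inStau_opp_root roots1)) combN mulrC -(extendD Px xu').
- by rewrite addrK (extend_inS Px xu').
- exact/inL_Stau/inL_comb_acoefs.
- exact: inStau_opp_comb.
Qed.

Lemma Gchi_of_pointK a t : is_Tpoint p g t -> Gchi_of_point (point_of_Gchi (a, t)) = (a, t).
Proof.
move=> Tt; have [t0 tD t_neq0 t_out] := Tt.
have Lu' := relint_inL relint_u'; have tu' := t_neq0 _ Lu'.
have Px := point_of_Gchi_point a Tt.
have xu' : point_of_Gchi (a, t) u' = t u'.
  by rewrite point_of_GchiE ?relint_inS // relint_acoefs // comb0 addr0 big1 ?mul1r.
have tu'Mn N : t (u' *+ N) = t u' ^+ N := morph_onMn inL0 inLD t0 tD N Lu'.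
rewrite /Gchi_of_point /extend xu'; congr pair; apply: functional_extensionality.
- move=> r; set N := shift_bound _.
  have S := shift_inS (inStau_opp_root roots1 r) (leqnn N).
  have acoefsE : acoefs (- e1 r + u' *+ N) = (fun s => (r == s) : nat).
    apply: functional_extensionality => s.
    rewrite /acoefs /acoef raddfD raddfN raddfMn /= roots1.1 (inLP _ Lu') mul0rn addr0.
    by case: eqP.
  rewrite point_of_GchiE // acoefsE comb_delta addrAC addNr add0r tu'Mn mulfK ?expf_neq0 //.
  rewrite (bigD1 r) //= eqxx expr1 big1 ?mulr1 // => s ne_sr.
  by rewrite eq_sym (negbTE ne_sr) expr0.
- move=> l; case: (boolP (inL p g l)) => [Ll | /t_out //]; set N := shift_bound l.
  have S := shift_inS (inL_Stau Ll) (leqnn N).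
  have acoefsE : acoefs (l + u' *+ N) = (fun _ => 0%N).
    by apply: functional_extensionality => s; rewrite /acoefs /acoef raddfD raddfMn /=
      (inLP _ Ll) (inLP _ Lu') mul0rn addr0.
  rewrite point_of_GchiE // acoefsE comb0 addr0 big1 ?mul1r //.
  by rewrite tD ?(closedMn inL0 inLD) // tu'Mn mulfK // expf_neq0.
Qed.

Lemma regular_Gchi_of_point1 r : regular_on_Xtau p g (fun x => (Gchi_of_point x).1 r).
Proof.
exists u'; split=> //; split; first exact: relint_inS.
set N := shift_bound (- e1 r); exists N, [:: (- e1 r + u' *+ N, 1)]; split.
  by rewrite /= shift_inS // inStau_opp_root.
by move=> x [_ x_neq0]; rewrite big_seq1 mul1r /= /extend divfK // expf_neq0 // x_neq0.
Qed.

Lemma regular_Gchi_of_point2 l : inL p g l -> regular_on_Xtau p g (fun x => (Gchi_of_point x).2 l).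
Proof.
move=> Ll; exists u'; split=> //; split; first exact: relint_inS.
set N := shift_bound l; exists N, [:: (l + u' *+ N, 1)]; split.
  by rewrite /= shift_inS // inL_Stau.
by move=> x [_ x_neq0]; rewrite big_seq1 mul1r /= Ll /extend divfK // expf_neq0 // x_neq0.
Qed.

Lemma Xtau_unit x : in_Xtau p g x ->
  exists y, is_point p y /\ mult x y = eps /\ mult y x = eps.
Proof.
move=> Xx; have Tt := Gchi_of_point_T Xx; rewrite -(point_of_GchiK Xx).
case: (Gchi_of_point x) Tt => a t /= Tt; have [t0 tD t_neq0 t_out] := Tt.
(* (a', t') is the inverse of (a, t) in G_chi. *)
pose t' l := if inL p g l then (t l)^-1 else 0.
pose a' r := - (t (e2 r - e1 r))^-1 * a r.
have Tt' : is_Tpoint p g t'.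
  rewrite /t'; split.
  - by rewrite inL0 t0 invr1.
  - by move=> l l' Ll Ll'; rewrite inLD // Ll Ll' tD // invfM.
  - by move=> l Ll; rewrite Ll invr_eq0 t_neq0.
  - by move=> l /negbTE ->.
have L_chi r : inL p g (e2 r - e1 r) := inL_face_roots_sub r roots2 roots1.
exists (point_of_Gchi (a', t')); split; first exact: point_of_Gchi_point.
rewrite -!point_of_Gchi_mul //; split; congr point_of_Gchi; congr pair;
  apply: functional_extensionality => z /=; rewrite /a' /t' /one_T.
- by rewrite mulrA mulrN mulfV ?t_neq0 // mulN1r subrr.
- by case: ifP => Lz; rewrite ?mulfV ?t_neq0 ?t_out ?mul0r ?Lz.
- by rewrite L_chi mulNr addNr.
- by case: ifP => Lz; rewrite ?mulVf ?t_neq0 ?t_out ?mul0r ?Lz.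
Qed.

End Extension.

End ToricMonoid.

End Cone.

Theorem mainTheorem1 (K : closedFieldType) (hK : [pchar K] =i pred0)
    (n m k : nat) (p : 'I_m -> 'rV[int]_n) (hcone : cone_rays p)
    (g : 'I_k -> 'I_m) (hface : is_face p g) (hreg : regular_face p g)
    (e1 e2 : 'I_k -> 'rV[int]_n) (hcomp : compatible p g e1 e2) :
  let mult := @toric_mult K n m k p g e1 e2 in
  (* the comultiplication is well defined: all exponents lie in S_sigma *)
  (forall u, inS p u -> forall i : 'I_k -> nat,
     (forall r, (i r <= acoef p g r u)%N) ->
     inS p (u + \sum_(r < k) e2 r *+ i r) /\
     inS p (u + \sum_(r < k) e1 r *+ (acoef p g r u - i r))) /\
  (* it defines a morphism X x X -> X *)
  (forall x y, is_point p x -> is_point p y -> is_point p (mult x y)) /\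
  (* which is associative *)
  (forall x y z, is_point p x -> is_point p y -> is_point p z ->
     mult (mult x y) z = mult x (mult y z)) /\
  exists eps : 'rV[int]_n -> K,
    [/\ is_point p eps,
        (* with a neutral element *)
        (forall x, is_point p x -> mult eps x = x /\ mult x eps = x),
        (* the group of invertible elements coincides with X_tau *)
        (forall x, (is_point p x /\ exists y, is_point p y /\
                      mult x y = eps /\ mult y x = eps) <-> in_Xtau p g x) &
        (* and is isomorphic, as an algebraic group, to G_chi *)
        exists (phi : ('I_k -> K) * ('rV[int]_n -> K) -> ('rV[int]_n -> K))
               (psi : ('rV[int]_n -> K) -> ('I_k -> K) * ('rV[int]_n -> K)),
          [/\ forall a t, is_Tpoint p g t ->
                in_Xtau p g (phi (a, t)) /\ psi (phi (a, t)) = (a, t),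
              forall x, in_Xtau p g x -> is_Tpoint p g (psi x).2 /\ phi (psi x) = x,
              forall a t a' t', is_Tpoint p g t -> is_Tpoint p g t' ->
                phi (Gchi_mul e1 e2 (a, t) (a', t')) = mult (phi (a, t)) (phi (a', t')),
              forall u, inS p u -> regular_on_G p g (fun at_ => phi at_ u) &
              (forall r, regular_on_Xtau p g (fun x => (psi x).1 r)) /\
              (forall l, inL p g l -> regular_on_Xtau p g (fun x => (psi x).2 l))]].
Proof.
move=> mult; rewrite {}/mult; have [u0 relint_u0] := is_face_relint hface.
have [roots1 roots2] := compatible_face_roots hcomp.
split.
  move=> u Su i le_iu; split; first exact (inS_comb roots2 Su le_iu).
  exact (inS_comb roots1 Su (fun r => leq_subr (i r) _)).
split; first exact: point_mult.
split; first by move=> x y z _ _ _; rewrite mult_assoc.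
exists (eps p g K e1); split.
- exact: eps_point.
- by move=> x Px; split; [exact: mult_eps_l | exact: mult_eps_r].
- move=> x; split=> [[Px unit_x] | Xx]; first exact: unit_in_Xtau unit_x.
  by split; [exact: Xx.1 | exact: Xtau_unit].
- exists (point_of_Gchi p g e1), (Gchi_of_point p g e1 u0); split.
  + by move=> a t Tt; split; [exact: point_of_Gchi_Xtau | exact: Gchi_of_pointK].
  + by move=> x Xx; split; [exact: Gchi_of_point_T | exact: point_of_GchiK].
  + by move=> a t a' t' Tt Tt'; exact: point_of_Gchi_mul.
  + by move=> u Su; exact: regular_point_of_Gchi.
  + by split=> [r | l Ll]; [exact: regular_Gchi_of_point1 | exact: regular_Gchi_of_point2].
Qed.
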